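(* Consider the setting described in the context and assume $D>2$. For $t\ge 1$ let $\mathcal{I}_0(t)=\bigcup_{m=0}^{t-1}\mathcal{F}_0(m)$. Then for every $t\ge1$, $a_i(t)\le 2N$ for all $i\in\mathcal{I}_0(t)$.
   Context: $G=(V,E)$ is a finite connected undirected graph with node set $V=\{0,\dots,N-1\}$; $\mathcal{N}(i)$ denotes the set of neighbours of $i$. Every edge has length $1$, $d_{ij}$ is the hop distance between $i$ and $j$, and $\mathcal{F}_k(m)=\{i\in V : d_{ik}=m\}$. Every node carries value $v_i=1$. The source set is $S(t)=\{D-1\}$ for $t\le 0$ and $S(t)=\{0\}$ for $t\ge 1$. The integer $D$ satisfies $\max_{i\in V}d_{i0}=D-1$, and nodes are labelled so that $0,1,\dots,D-1$ is a path in which node $i$ is a neighbour of $i+1$ with $d_{0,i}=i$ for $0\le i\le D-1$. The algorithm updates, for $t\ge1$: $\hat d_i(t)=0$ if $i\in S(t)$, and $\hat d_i(t)=\min_{j\in\mathcal{N}(i)}\{\hat d_j(t-1)+1\}$ otherwise; $c_i(t)=i$ if $i\in S(t)$, and otherwise $c_i(t)$ is a minimizer $j\in\mathcal{N}(i)$ of $\hat d_j(t-1)+1$; $C_i(t)=\{j : c_j(t-1)=i \text{ and } \hat d_j(t-1)=\hat d_i(t)+1\}$; $a_i(t)=\sum_{j\in C_i(t)}a_j(t-1)+v_i$. Initial values $(\hat d_i(0),c_i(0),a_i(0))$ are steady-state values of these recursions when the source set is constantly $\{D-1\}$; in particular $\hat d_i(0)=m$ for all $i\in\mathcal{F}_{D-1}(m)$,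 and for every integer $m$, $\sum_{i\in\mathcal{F}_{D-1}(m)}a_i(0)\le N$. *)

From mathcomp Require Import all_boot.
Set Implicit Arguments. Unset Strict Implicit. Unset Printing Implicit Defensive.

Section Graph.
Variables (T : finType) (e : rel T).

Fixpoint ball (k : nat) (i : T) : {set T} :=
  if k is k'.+1 then ball k' i :|: [set y | [exists x in ball k' i, e x y]]
  else [set i].

(* hop distance: least k with j in ball k i (well defined for connected graphs,
   where it is < #|T|) *)
Definition dist (i j : T) : nat := find (fun k => j \in ball k i) (iota 0 #|T|).

Definition simple_graph := symmetric e /\ irreflexive e.
Definition connected_graph := forall i j, connect e i j.

(* One update of the algorithm (for time t >= 1), from old values (d, c, a)
   at time t-1 to new values (d', c', a') at time t, with source set {src},
   and node values v_i = 1. *)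
Definition step (src : T) (d : T -> nat) (c : T -> T) (a : T -> nat)
  (d' : T -> nat) (c' : T -> T) (a' : T -> nat) : Prop :=
  forall i : T,
    [/\
        (if i == src then d' i = 0
         else (exists2 j, e i j & d' i = d j + 1) /\
              (forall j, e i j -> d' i <= d j + 1)),
        (if i == src then c' i = i
         else e i (c' i) /\ (forall j, e i j -> d (c' i) + 1 <= d j + 1)) &
        a' i = \sum_(j in [set j | (c j == i) && (d j == d' i + 1)]) a j + 1].

End Graph.

From mathcomp Require Import all_boot zify.
Set Implicit Arguments. Unset Strict Implicit. Unset Printing Implicit Defensive.

(* The key quantity is the potential d_s(k) + s.  Node k at time s+1 only
   collects children j whose potential at time s equals its own, so the mass
   on a potential level grows from time s to s+1 by at most the number of
   nodes on that level at time s+1.  A node at hop distance < s from the new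
   source is settled: d_s(k) = d(k,0) from then on, so its potential increases
   strictly and it meets each level at most once.  Any other node is stale: its
   estimate d_s(k) is nondecreasing in s, so its potential again increases
   strictly.  The initial mass on level K is at most the number of nodes with
   d_0 >= K, and such a node stays above level K while stale.  Hence every
   level carries mass at most 2N, at every node and every time, not only on
   I_0(t). *)

Section Balls.
Variables (T : finType) (e : rel T).

Lemma ball_self r k : k \in ball e r k.
Proof. by elim: r => [|r IH]; rewrite /= ?in_set1 // in_setU IH. Qed.

Lemma ball_subS r k : ball e r k \subset ball e r.+1 k.
Proof. exact: subsetUl. Qed.

Lemma ball_edge k j : e k j -> forall r, ball e r j \subset ball e r.+1 k.
Proof.
move=> ekj; elim=> [|r IH]; apply/subsetP=> y.
  rewrite in_set1 => /eqP ->; rewrite /= in_setU; apply/orP; right.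
  by rewrite inE; apply/existsP; exists k; rewrite in_set1 eqxx.
rewrite [ball e r.+1 j]/= in_setU inE => /orP [yb|/existsP [x /andP [xb exy]]].
  exact: subsetP (ball_subS _ _) _ (subsetP IH _ yb).
rewrite [ball e r.+2 k]/= in_setU; apply/orP; right.
by rewrite inE; apply/existsP; exists x; rewrite (subsetP IH).
Qed.

Lemma ballS_inv r k y :
  y \in ball e r.+1 k -> y = k \/ exists2 j, e k j & y \in ball e r j.
Proof.
elim: r y => [|r IH] y.
  rewrite /= in_setU in_set1 inE => /orP [/eqP ->|/existsP [x /andP [xk exy]]].
    by left.
  by right; exists y; rewrite ?in_set1 // -(set1P xk).
rewrite [ball e r.+2 k]/= in_setU inE => /orP [/IH [->|[j ekj yb]]|].
- by left.
- by right; exists j; last exact: subsetP (ball_subS _ _) _ yb.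
case/existsP => x /andP [/IH [xk|[j ekj xb]] exy]; right.
  by exists y; rewrite -?xk ?ball_self.
exists j; rewrite // [ball e r.+1 j]/= in_setU; apply/orP; right.
by rewrite inE; apply/existsP; exists x; rewrite xb.
Qed.

Lemma dist_le_card k x : dist e k x <= #|T|.
Proof. by rewrite -[X in _ <= X](size_iota 0) find_size. Qed.

Lemma dist_le r k x : x \in ball e r k -> dist e k x <= r.
Proof.
move=> xb; have [rT|Tr] := ltnP r #|T|; last exact: leq_trans (dist_le_card k x) Tr.
rewrite /dist leqNgt; apply/negP => /(before_find 0).
by rewrite nth_iota // add0n xb.
Qed.

Lemma dist_refl k : dist e k k = 0.
Proof. by apply/eqP; rewrite -leqn0 (dist_le (r := 0)) ?ball_self. Qed.

Lemma mem_ball_dist k x : dist e k x < #|T| -> x \in ball e (dist e k x) k.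
Proof.
rewrite /dist => dlt; have hasx : has (fun r => x \in ball e r k) (iota 0 #|T|).
  by rewrite has_find size_iota.
by have := nth_find 0 hasx; rewrite nth_iota ?add0n.
Qed.

Lemma dist_edge k j x : e k j -> dist e k x <= (dist e j x).+1.
Proof.
move=> ekj; have [jx|Tj] := ltnP (dist e j x) #|T|.
  exact/dist_le/(subsetP (ball_edge ekj _))/mem_ball_dist.
exact: leq_trans (dist_le_card k x) (leqW Tj).
Qed.

End Balls.

Lemma cardsU_disjoint (T : finType) (A B : {set T}) :
  [disjoint A & B] -> #|A :|: B| = #|A| + #|B|.
Proof. by move=> dAB; apply/eqP; rewrite (leq_card_setU A B).2. Qed.

Lemma sum_flow_le (T : finType) (par : T -> T) (d d' a a' : T -> nat) (P Q : pred T) :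
  (forall k, a' k = \sum_(j in [set j | (par j == k) && (d j == d' k + 1)]) a j + 1) ->
  (forall j, P (par j) -> d j = d' (par j) + 1 -> Q j) ->
  \sum_(k | P k) a' k <= \sum_(j | Q j) a j + #|[set k | P k]|.
Proof.
move=> a'E PQ; rewrite (eq_bigr _ (fun k _ => a'E k)) big_split /=.
rewrite sum_nat_cond_const muln1 leq_add2r (exchange_big_dep Q) /=; last first.
  by move=> k j Pk; rewrite inE => /andP [/eqP pj /eqP dj]; apply: PQ; rewrite pj.
apply: leq_sum => j _; rewrite big_mkcond (bigD1 (par j)) //= big1 ?addn0.
  by case: ifP.
by move=> k /negbTE pk; rewrite inE eq_sym pk andbF.
Qed.

Lemma steady_level_mass_le (T : finType) (par : T -> T) (d a : T -> nat) :
  (forall k, a k = \sum_(j in [set j | (par j == k) && (d j == d k + 1)]) a j + 1) ->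
  forall K, \sum_(k | d k == K) a k <= #|[set x | K <= d x]|.
Proof.
move=> aE; suff mass_le g K : \max_x d x < K + g ->
    \sum_(k | d k == K) a k <= #|[set x | K <= d x]|.
  by move=> K; apply: (mass_le (\max_x d x).+1); lia.
elim: g K => [|g IH] K dK.
  rewrite big_pred0 // => k; have := leq_bigmax (F := d) k; lia.
apply: leq_trans (sum_flow_le (Q := fun j => d j == K.+1) aE _) _.
  by move=> j /eqP <- ->; rewrite addn1.
apply: leq_trans (leq_add (IH K.+1 _) (leqnn _)) _; first lia.
rewrite -(cardsID [set x | d x == K] [set x | K <= d x]) addnC.
by apply: leq_add; apply/subset_leq_card/subsetP => x; rewrite !inE; lia.
Qed.

Section Wave.
Variables (T : finType) (e : rel T) (z : T).
Variables (d : nat -> T -> nat) (c : nat -> T -> T) (a : nat -> T -> nat).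
Hypothesis step_dyn : forall s, step e z (d s) (c s) (a s) (d s.+1) (c s.+1) (a s.+1).
Hypothesis a0_steady :
  forall k, a 0 k = \sum_(j in [set j | (c 0 j == k) && (d 0 j == d 0 k + 1)]) a 0 j + 1.
Hypothesis d0_edge : forall k j, e k j -> d 0 k <= d 0 j + 1.
Hypothesis z_reach : forall x, dist e x z < #|T|.

Lemma d_src s : d s.+1 z = 0.
Proof. by case: (step_dyn s z); rewrite eqxx. Qed.

Lemma d_le_nbr s k j : k != z -> e k j -> d s.+1 k <= d s j + 1.
Proof. by move=> kz ekj; case: (step_dyn s k); rewrite (negbTE kz) => -[_ ->]. Qed.

Lemma d_eq_nbr s k : k != z -> exists2 j, e k j & d s.+1 k = d s j + 1.
Proof. by move=> kz; case: (step_dyn s k); rewrite (negbTE kz) => -[]. Qed.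

Lemma d_le_ball r k : z \in ball e r k -> forall s, r < s -> d s k <= r.
Proof.
elim: r k => [|r IH] k; first by rewrite in_set1 => /eqP <- [|s] //; rewrite d_src.
case/ballS_inv => [<-|[j ekj zj]] [|s] //; first by rewrite d_src.
move=> rs; have [->|kz] := eqVneq k z; first by rewrite d_src.
by apply: leq_trans (d_le_nbr _ kz ekj) _; rewrite addn1 ltnS IH.
Qed.

Lemma minn_dist_le_d s k : minn (dist e k z) s <= d s k.
Proof.
elim: s k => [|s IH] k; first by rewrite minn0.
have [->|kz] := eqVneq k z; first by rewrite dist_refl.
case: (d_eq_nbr s kz) => j ekj ->; have := IH j; have := dist_edge z ekj; lia.
Qed.

Lemma d_settled s k : dist e k z < s -> d s k = dist e k z.
Proof.
move=> ks; have := d_le_ball (mem_ball_dist (z_reach k)) ks.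
have := minn_dist_le_d s k; lia.
Qed.

Lemma d_stale_step s k : s < dist e k z -> d s k <= d s.+1 k.
Proof.
elim: s k => [|s IH] k ks.
all: have kz : k != z by apply: contraTneq ks => ->; rewrite dist_refl.
  by case: (d_eq_nbr 0 kz) => j /d0_edge ekj ->.
case: (d_eq_nbr s.+1 kz) => j ekj ->; apply: leq_trans (d_le_nbr _ kz ekj) _.
by rewrite leq_add2r IH //; have := dist_edge z ekj; lia.
Qed.

Lemma d_stale_mono r s k : r <= s -> s <= dist e k z -> d r k <= d s k.
Proof.
move=> /subnK <-; elim: (s - r) => [|g IH] gk //; rewrite addSn.
by apply: leq_trans (IH _) (d_stale_step _); lia.
Qed.

Definition level s K := [set k | d s k + s == K].
Definition settled s := [set k | dist e k z < s].

Fixpoint settled_hits K s : {set T} :=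
  if s is s'.+1 then settled_hits K s' :|: (level s K :&: settled s) else set0.

Fixpoint stale_hits K s : {set T} :=
  if s is s'.+1 then stale_hits K s' :|: (level s K :\: settled s)
  else [set x | K <= d 0 x].

Lemma settled_hitsP K s x : x \in settled_hits K s ->
  exists r, [/\ r <= s, d r x + r = K & dist e x z < r].
Proof.
elim: s => [|s IH] /=; first by rewrite inE.
rewrite !inE => /orP [/IH [r [rs rK xr]]|/andP [/eqP sK xs]].
  by exists r; split; first exact: leqW.
by exists s.+1.
Qed.

Lemma stale_hitsP K s x : x \in stale_hits K s ->
  exists r, [/\ r <= s, r <= dist e x z & K <= d r x + r].
Proof.
elim: s => [|s IH] /=; first by rewrite inE => xK; exists 0; rewrite addn0.
rewrite !inE => /orP [/IH [r [rs rx rK]]|/andP [xs /eqP sK]].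
  by exists r; split; first exact: leqW.
by exists s.+1; split; rewrite ?sK //; lia.
Qed.

Lemma settled_hits_disjoint K s :
  [disjoint settled_hits K s & level s.+1 K :&: settled s.+1].
Proof.
rewrite disjoint_subset; apply/subsetP => x /settled_hitsP [r [rs rK xr]].
rewrite !inE; apply/negP => /andP [/eqP sK xs].
by move: rK sK; rewrite !d_settled //; lia.
Qed.

Lemma stale_hits_disjoint K s :
  [disjoint stale_hits K s & level s.+1 K :\: settled s.+1].
Proof.
rewrite disjoint_subset; apply/subsetP => x /stale_hitsP [r [rs rx rK]].
rewrite !inE -leqNgt; apply/negP => /andP [xs /eqP sK].
by have := d_stale_mono (leqW rs) xs; lia.
Qed.

Lemma level_mass_le s K :
  \sum_(k | d s k + s == K) a s k <= #|settled_hits K s| + #|stale_hits K s|.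
Proof.
elim: s K => [|s IH] K.
  rewrite cards0 add0n; under eq_bigl do rewrite addn0.
  exact: steady_level_mass_le a0_steady K.
have inflow : \sum_(k | d s.+1 k + s.+1 == K) a s.+1 k <=
    \sum_(j | d s j + s == K) a s j + #|level s.+1 K|.
  apply: (sum_flow_le (par := c s) (d := d s) (d' := d s.+1)) => [k|j /eqP <- dj].
    by case: (step_dyn s k).
  by apply/eqP; lia.
apply: leq_trans inflow _.
rewrite /= !cardsU_disjoint ?settled_hits_disjoint ?stale_hits_disjoint //.
rewrite -(cardsID (settled s.+1) (level s.+1 K)); have := IH K; lia.
Qed.

Theorem a_le_2card s i : a s i <= 2 * #|T|.
Proof.
have a_le_level : a s i <= \sum_(k | d s k + s == d s i + s) a s k.
  by rewrite (bigD1 i) //= leq_addr.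
apply: leq_trans a_le_level (leq_trans (level_mass_le _ _) _).
by rewrite mul2n -addnn leq_add ?max_card.
Qed.

End Wave.

Theorem lemma5 (n : nat) (e : rel 'I_n.+1) (D : nat)
  (d : nat -> 'I_n.+1 -> nat) (c : nat -> 'I_n.+1 -> 'I_n.+1)
  (a : nat -> 'I_n.+1 -> nat) :
  simple_graph e ->
  connected_graph e ->
  2 < D ->
  D <= n.+1 ->
  \max_(i : 'I_n.+1) dist e i (inord 0) = D - 1 ->
  (forall k, k.+1 < D -> e (inord k) (inord k.+1)) ->
  (forall k, k < D -> dist e (inord 0) (inord k) = k) ->
  (* initial values: steady state for constant source set {D-1} *)
  step e (inord (D - 1)) (d 0) (c 0) (a 0) (d 0) (c 0) (a 0) ->
  (forall i, d 0 i = dist e i (inord (D - 1))) ->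
  (forall m, \sum_(i | dist e i (inord (D - 1)) == m) a 0 i <= n.+1) ->
  (* dynamics for t >= 1 with source set {0} *)
  (forall t, step e (inord 0) (d t) (c t) (a t) (d t.+1) (c t.+1) (a t.+1)) ->
  forall t, 1 <= t ->
  forall i, dist e i (inord 0) <= t - 1 -> a t i <= 2 * n.+1.
Proof.
move=> _ _ _ DN dmax _ _ steady0 d0E _ dyn t _ i _.
rewrite -[n.+1]card_ord; apply: (a_le_2card dyn) => [k|k j ekj|x].
- by case: (steady0 k).
- by rewrite !d0E addn1 dist_edge.
- have := leq_bigmax (F := fun x => dist e x (inord 0)) x.
  by rewrite dmax card_ord; lia.
Qed.
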